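(* The symmetry locus $\mathcal S\subset\mathcal M_2\cong\mathbf C^2$ is an algebraic curve of degree three and genus zero in the coordinates $(\sigma_1,\sigma_2)$. It is given parametrically by $$\sigma_1=4k-2+k^{-1},\qquad \sigma_2=4k^2-4k+5-2k^{-1},\qquad k\in\mathbf C\setminus\{0\}.$$ This curve is non-singular except for a cusp at the point $\langle z\mapsto1/z^2\rangle$, which corresponds to $k=-1/2$, $(\sigma_1,\sigma_2)=(-6,12)$.
   Context: $\mathrm{Rat}_2$ is the space of holomorphic degree-$2$ maps of the Riemann sphere; each $f$ has three fixed points counted with multiplicity, with multipliers $\mu_1,\mu_2,\mu_3$ and elementary symmetric functions $\sigma_1,\sigma_2,\sigma_3$. $\mathcal M_2$, the set of Möbius conjugacy classes $\langle f\rangle$, is identified with $\mathbf C^2$ via $(\sigma_1,\sigma_2)$. An automorphism of $f$ is a Möbius transformation $g\neq\mathrm{id}$ with $g\circ f\circ g^{-1}=f$. The symmetry locus $\mathcal S$ is the set of $\langle f\rangle\in\mathcal M_2$ such that $f$ has a non-trivial automorphism; equivalently the set of classes of maps $z\mapsto k(z+z^{-1})$, $k\neq0$. *)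

From HB Require Import structures.
From mathcomp Require Import all_boot all_order all_algebra.
From mathcomp Require Import mpoly.
Set Implicit Arguments. Unset Strict Implicit. Unset Printing Implicit Defensive.
Import Order.TTheory GRing.Theory Num.Theory.
Local Open Scope ring_scope.

(* Throughout, C is an algebraically closed field of characteristic 0 with a
   numeric structure (e.g. the complex numbers, R[i] for a real closed R);
   everything below is purely algebraic. *)

Section RatMaps.
Variable C : numClosedFieldType.

(* A point of C^2 (homogeneous coordinates [x : y] on the Riemann sphere). *)
Definition pt := (C * C)%type.

Definition form2 := (C * C * C)%type.
Definition eval2 (q : form2) (v : pt) : C :=
  let: (a, b, c) := q in let: (x, y) := v in a * x ^+ 2 + b * x * y + c * y ^+ 2.

(* Dehomogenisations of a quadratic form, as univariate polynomials:
   chart at 0: z |-> q(z,1);  chart at infinity: w |-> q(1,w). *)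
Definition dehom0 (q : form2) : {poly C} :=
  let: (a, b, c) := q in a *: 'X^2 + b *: 'X + c%:P.
Definition dehomInf (q : form2) : {poly C} :=
  let: (a, b, c) := q in c *: 'X^2 + b *: 'X + a%:P.

(* A pair F = (P, Q) of quadratic forms; it represents the map of the
   Riemann sphere [x : y] |-> [P(x,y) : Q(x,y)], i.e. z |-> P(z,1)/Q(z,1). *)
Definition hmap := (form2 * form2)%type.
Definition hev (F : hmap) (v : pt) : pt := (eval2 F.1 v, eval2 F.2 v).

(* F defines a holomorphic map of degree exactly 2 of the Riemann sphere
   iff P and Q have no common zero on C^2 \ {0}.  Rat_2 = such F (up to the
   irrelevant common scalar). *)
Definition is_rat2 (F : hmap) : Prop :=
  forall v : pt, v <> (0, 0) -> hev F v <> (0, 0).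

(* Moebius transformations: invertible 2x2 matrices (al, be, ga, de),
   acting by [x : y] |-> [al x + be y : ga x + de y]. *)
Definition mob := (C * C * C * C)%type.
Definition mob_ev (g : mob) (v : pt) : pt :=
  let: (al, be, ga, de) := g in let: (x, y) := v in
  (al * x + be * y, ga * x + de * y).
Definition mob_det (g : mob) : C :=
  let: (al, be, ga, de) := g in al * de - be * ga.
(* g is the identity of the sphere iff its matrix is scalar. *)
Definition mob_is_id (g : mob) : Prop :=
  let: (al, be, ga, de) := g in be = 0 /\ ga = 0 /\ al = de.

Definition same_point (u v : pt) : Prop := u.1 * v.2 - u.2 * v.1 = 0.

Definition commutes (g : mob) (F : hmap) : Prop :=
  forall v : pt, v <> (0, 0) -> same_point (mob_ev g (hev F v)) (hev F (mob_ev g v)).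

Definition has_nontriv_aut (F : hmap) : Prop :=
  exists g : mob, mob_det g <> 0 /\ ~ mob_is_id g /\ commutes g F.

(* Fixed point polynomial: [x:y] is fixed iff y P(x,y) - x Q(x,y) = 0. *)
Definition fixpoly (F : hmap) (v : pt) : C :=
  v.2 * eval2 F.1 v - v.1 * eval2 F.2 v.

(* (v1, v2, v3) are the three fixed points of F counted with multiplicity:
   the binary cubic fixpoly factors as kappa * prod_i (y_i X - x_i Y). *)
Definition fixed_points (F : hmap) (v1 v2 v3 : pt) : Prop :=
  [/\ v1 <> (0, 0), v2 <> (0, 0), v3 <> (0, 0) &
   exists2 kappa : C, kappa != 0 &
     forall x y : C, fixpoly F (x, y) =
       kappa * ((v1.2 * x - v1.1 * y) * (v2.2 * x - v2.1 * y) * (v3.2 * x - v3.1 * y))].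

(* If y <> 0, z = x/y is a finite fixed point of
   f(z) = p(z)/q(z) (p = P(.,1), q = Q(.,1)) and the multiplier is
   f'(z) = (p' q - p q')(z) / q(z)^2.  If y = 0 (the point infinity), in the
   coordinate w = 1/z the map is w |-> 1/f(1/w) = Q(1,w)/P(1,w), and the
   multiplier is its derivative at w = 0. *)
Definition ratderiv (p q : {poly C}) (z : C) : C :=
  (p^`() * q - p * q^`()).[z] / q.[z] ^+ 2.
Definition multiplier (F : hmap) (v : pt) : C :=
  if v.2 != 0 then ratderiv (dehom0 F.1) (dehom0 F.2) (v.1 / v.2)
  else ratderiv (dehomInf F.2) (dehomInf F.1) 0.

Definition sigmas (F : hmap) (s1 s2 : C) : Prop :=
  exists v1 v2 v3 : pt, fixed_points F v1 v2 v3 /\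
    let m1 := multiplier F v1 in let m2 := multiplier F v2 in
    let m3 := multiplier F v3 in
    s1 = m1 + m2 + m3 /\ s2 = m1 * m2 + m1 * m3 + m2 * m3.

Definition symmetry_locus (s : C * C) : Prop :=
  exists F : hmap, is_rat2 F /\ has_nontriv_aut F /\ sigmas F s.1 s.2.

(* The map z |-> 1/z^2, i.e. [x : y] |-> [y^2 : x^2]. *)
Definition inv_sq_map : hmap := ((0, 0, 1), (1, 0, 0)).

Definition param (k : C) : C * C :=
  (4 * k - 2 + k^-1, 4 * k ^+ 2 - 4 * k + 5 - 2 * k^-1).

Definition pt2 (s : C * C) : 'I_2 -> C := fun i => if val i == 0%N then s.1 else s.2.
Definition i1 : 'I_2 := @Ordinal 2 0 isT.
Definition i2 : 'I_2 := @Ordinal 2 1 isT.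

Definition mconst (p : {mpoly C[2]}) : bool := (msize p <= 1)%N.
Definition mirreducible (p : {mpoly C[2]}) : Prop :=
  ~~ mconst p /\ forall a b : {mpoly C[2]}, p = a * b -> mconst a || mconst b.

Definition msingular (p : {mpoly C[2]}) (s : C * C) : Prop :=
  [/\ p.@[pt2 s] = 0, (p^`M(i1)).@[pt2 s] = 0 & (p^`M(i2)).@[pt2 s] = 0].

(* cusp: a singular point of multiplicity exactly 2 whose tangent cone is a
   single (double) line: the Hessian is nonzero with zero determinant. *)
Definition mcusp (p : {mpoly C[2]}) (s : C * C) : Prop :=
  let h11 := (p^`M(i1)^`M(i1)).@[pt2 s] in
  let h12 := (p^`M(i1)^`M(i2)).@[pt2 s] in
  let h22 := (p^`M(i2)^`M(i2)).@[pt2 s] in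
  [/\ msingular p s, (h11, h12, h22) <> (0, 0, 0) & h11 * h22 - h12 ^+ 2 = 0].

End RatMaps.

(* Multipliers are conjugation invariant, so an automorphism g of f may be
   assumed triangular.  It cannot be parabolic (a translation commutes with
   no quadratic map), so it is diagonal, z |-> w z.  Comparing coefficients
   in f (w z) = w f (z) leaves two normal forms: for w = -1 the odd maps
   (a z^2 + c) / (e z), with multipliers e/a at infinity and 2a/e - 1 at the
   two finite fixed points, giving param (a/e); otherwise z |-> c / (d z^2),
   with three multipliers -2, giving param (-1/2).  Conversely k (z + 1/z)
   realises param k.  Eliminating k from param gives the cubic; it contains
   no line, hence is irreducible, and its only singular point is the cusp
   (-6, 12). *)

From HB Require Import structures.
From mathcomp Require Import all_boot all_order all_algebra.
From mathcomp Require Import mpoly.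
From mathcomp Require Import ring zify.
Set Implicit Arguments. Unset Strict Implicit. Unset Printing Implicit Defensive.
Import Order.TTheory GRing.Theory Num.Theory.
Local Open Scope ring_scope.

Section BinaryForms.
Variable C : numClosedFieldType.
Implicit Types (a b c d e f p q x y : C) (v : pt C).

Lemma pair_neq0 x y : (x, y) <> (0, 0) <-> (x != 0) || (y != 0).
Proof.
split=> [xy0 | /orP[] /eqP nz [x0 y0] //].
by apply: contra_notT xy0; rewrite negb_or !negbK => /andP[/eqP-> /eqP->].
Qed.

Lemma mulf_eq0_or x y : x * y = 0 -> x = 0 \/ y = 0.
Proof. by move/eqP; rewrite mulf_eq0 => /orP[] /eqP; [left | right]. Qed.

Lemma mulf_eq0_cancelr x y : x * y = 0 -> y != 0 -> x = 0.
Proof. by move=> /mulf_eq0_or[] // ->; rewrite eqxx. Qed.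

Lemma mulf_eq0_cancell x y : x * y = 0 -> x != 0 -> y = 0.
Proof. by rewrite mulrC; apply: mulf_eq0_cancelr. Qed.

Lemma quadratic_root p q : exists t : C, t ^+ 2 + p * t + q = 0.
Proof.
set r := sqrtC (p ^+ 2 - 4 * q); exists ((- p + r) / 2).
have -> : ((- p + r) / 2) ^+ 2 + p * ((- p + r) / 2) + q = (r ^+ 2 - (p ^+ 2 - 4 * q)) / 4.
  by field.
by rewrite sqrtCK subrr mul0r.
Qed.

Lemma form2_zero a b c : exists2 v : pt C, v <> (0, 0) & eval2 (a, b, c) v = 0.
Proof.
have [-> | a0] := eqVneq a 0.
  by exists (1, 0); [apply/pair_neq0; rewrite oner_eq0 | rewrite /=; ring].
have [t tE] := quadratic_root (b / a) (c / a).
exists (t, 1); first by apply/pair_neq0; rewrite oner_eq0 orbT.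
by rewrite /= -[RHS](mulr0 a) -tE; field.
Qed.

Lemma natmul_eq0 (n : nat) x : n%:R * x = 0 -> (n != 0)%N -> x = 0.
Proof. by move=> /mulf_eq0_or[/eqP|//]; rewrite pnatr_eq0 => /eqP->. Qed.

Definition binary_quartic c4 c3 c2 c1 c0 x y :=
  c4 * x ^+ 4 + c3 * x ^+ 3 * y + c2 * x ^+ 2 * y ^+ 2 + c1 * x * y ^+ 3 + c0 * y ^+ 4.

(* Characteristic 0 is used: the values at [1 : y] for y = 1, -1, 2 separate
   the middle coefficients. *)
Lemma binary_quartic_eq0 c4 c3 c2 c1 c0 :
  (forall x y, (x, y) <> (0, 0) -> binary_quartic c4 c3 c2 c1 c0 x y = 0) ->
  [/\ c4 = 0, c3 = 0, c2 = 0, c1 = 0 & c0 = 0].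
Proof.
move=> H; pose Q := binary_quartic c4 c3 c2 c1 c0.
have Q1 y : Q 1 y = 0 by apply: H; apply/pair_neq0; rewrite oner_eq0.
have Q01 : Q 0 1 = 0 by apply: H; apply/pair_neq0; rewrite oner_eq0 orbT.
have c40 : c4 = Q 1 0 by rewrite /Q /binary_quartic; ring.
have c00 : c0 = Q 0 1 by rewrite /Q /binary_quartic; ring.
rewrite Q1 in c40; rewrite Q01 in c00.
have e2 : 2%:R * c2 = Q 1 1 + Q 1 (-1) by rewrite /Q /binary_quartic c40 c00; ring.
rewrite !Q1 addr0 in e2; have c20 := natmul_eq0 e2 isT.
have e1 : 6%:R * c1 = Q 1 2 - 2%:R * Q 1 1.
  by rewrite /Q /binary_quartic c40 c00 c20; ring.
rewrite !Q1 mulr0 subr0 in e1; have c10 := natmul_eq0 e1 isT.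
have c30 : c3 = Q 1 1 by rewrite /Q /binary_quartic c40 c00 c20 c10; ring.
by rewrite Q1 in c30.
Qed.

Lemma binary_cubic_eq0 c3 c2 c1 c0 :
  (forall x y, c3 * x ^+ 3 + c2 * x ^+ 2 * y + c1 * x * y ^+ 2 + c0 * y ^+ 3 = 0) ->
  [/\ c3 = 0, c2 = 0, c1 = 0 & c0 = 0].
Proof.
move=> H; have [] // := @binary_quartic_eq0 c3 c2 c1 c0 0 => x y _.
transitivity (x * (c3 * x ^+ 3 + c2 * x ^+ 2 * y + c1 * x * y ^+ 2 + c0 * y ^+ 3)).
  by rewrite /binary_quartic; ring.
by rewrite H mulr0.
Qed.

End BinaryForms.

Section RationalMaps.
Variable C : numClosedFieldType.
Implicit Types (a b c d e f : C) (v : pt C) (F : hmap C).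

Lemma rat2_common_zero F v :
  is_rat2 F -> v <> (0, 0) -> eval2 F.1 v = 0 -> eval2 F.2 v = 0 -> False.
Proof. by move=> HF v0 P0 Q0; apply: (HF v v0); rewrite /hev P0 Q0. Qed.

Lemma eval2_0 v : eval2 (0, 0, 0) v = 0 :> C.
Proof. by case: v => x y /=; ring. Qed.

Lemma rat2_num_neq0 F : is_rat2 F -> F.1 <> (0, 0, 0).
Proof.
case: F => P [[d e] f] HF /= P0; have [v v0 Qv] := form2_zero d e f.
by apply: (rat2_common_zero HF v0 _ Qv); rewrite P0 eval2_0.
Qed.

Lemma rat2_den_neq0 F : is_rat2 F -> F.2 <> (0, 0, 0).
Proof.
case: F => [[[a b] c] Q] HF /= Q0; have [v v0 Pv] := form2_zero a b c.
by apply: (rat2_common_zero HF v0 Pv); rewrite Q0 eval2_0.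
Qed.

Lemma rat2_at_infty a b c d e f : is_rat2 ((a, b, c), (d, e, f)) -> a = 0 -> d = 0 -> False.
Proof.
move=> HF a0 d0; apply: (rat2_common_zero (v := (1, 0)) HF).
  by apply/pair_neq0; rewrite oner_eq0.
all: by rewrite /= ?a0 ?d0; ring.
Qed.

Lemma rat2_at_zero a b c d e f : is_rat2 ((a, b, c), (d, e, f)) -> c = 0 -> f = 0 -> False.
Proof.
move=> HF c0 f0; apply: (rat2_common_zero (v := (0, 1)) HF).
  by apply/pair_neq0; rewrite oner_eq0 orbT.
all: by rewrite /= ?c0 ?f0; ring.
Qed.

End RationalMaps.

Section MobiusAction.
Variable C : numClosedFieldType.
Implicit Types (c s t : C) (u v w : pt C) (q r : form2 C) (F : hmap C) (g h : mob C).

Definition scalev c v : pt C := (c * v.1, c * v.2).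
Definition bracket u w : C := u.1 * w.2 - u.2 * w.1.

Definition mob_mul g h : mob C :=
  let: (a1, b1, c1, d1) := g in let: (a2, b2, c2, d2) := h in
  (a1 * a2 + b1 * c2, a1 * b2 + b1 * d2, c1 * a2 + d1 * c2, c1 * b2 + d1 * d2).
Definition mob_adj h : mob C := let: (a, b, c, d) := h in (d, - b, - c, a).
Definition mob_scale c g : mob C :=
  let: (a, b, c', d) := g in (c * a, c * b, c * c', c * d).
Definition mob_conj h g := mob_mul h (mob_mul g (mob_adj h)).

Definition form2_pullback q h : form2 C :=
  let: (a, b, c) := q in let: (al, be, ga, de) := h in
  (a * al ^+ 2 + b * al * ga + c * ga ^+ 2,
   2 * a * al * be + b * (al * de + be * ga) + 2 * c * ga * de,
   a * be ^+ 2 + b * be * de + c * de ^+ 2).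
Definition form2_comb s t q r : form2 C :=
  let: (a1, b1, c1) := q in let: (a2, b2, c2) := r in
  (s * a1 + t * a2, s * b1 + t * b2, s * c1 + t * c2).
(* h o F o h^-1, with the adjugate of h standing for h^-1 (they agree projectively). *)
Definition hmap_conj h F : hmap C :=
  let: (h1, h2, h3, h4) := h in
  let P := form2_pullback F.1 (mob_adj h) in let Q := form2_pullback F.2 (mob_adj h) in
  (form2_comb h1 h2 P Q, form2_comb h3 h4 P Q).

Lemma mob_ev_mul g h v : mob_ev (mob_mul g h) v = mob_ev g (mob_ev h v).
Proof.
case: g h v => [[[a1 b1] c1] d1] [[[a2 b2] c2] d2] [x y] /=; congr (_, _); ring.
Qed.

Lemma mob_ev_conj h g v :
  mob_ev (mob_conj h g) v = mob_ev h (mob_ev g (mob_ev (mob_adj h) v)).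
Proof. by rewrite !mob_ev_mul. Qed.

Lemma mob_ev_adjK h v : mob_ev (mob_adj h) (mob_ev h v) = scalev (mob_det h) v.
Proof. by case: h v => [[[a b] c] d] [x y]; rewrite /scalev /=; congr (_, _); ring. Qed.

Lemma mob_det_adj h : mob_det (mob_adj h) = mob_det h.
Proof. by case: h => [[[a b] c] d] /=; ring. Qed.

Lemma mob_det_conj h g : mob_det (mob_conj h g) = mob_det h ^+ 2 * mob_det g.
Proof. by case: h g => [[[a b] c] d] [[[a' b'] c'] d'] /=; ring. Qed.

Lemma mob_ev_scalev g c v : mob_ev g (scalev c v) = scalev c (mob_ev g v).
Proof. by case: g v => [[[a b] c'] d] [x y]; rewrite /scalev /=; congr (_, _); ring. Qed.

Lemma hev_scalev F c v : hev F (scalev c v) = scalev (c ^+ 2) (hev F v).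
Proof.
by case: F v => [[[a b] c'] [[d e] f]] [x y]; rewrite /scalev /hev /=; congr (_, _); ring.
Qed.

Lemma scalevA c s v : scalev c (scalev s v) = scalev (c * s) v.
Proof. by rewrite /scalev /=; congr (_, _); ring. Qed.

Lemma bracket_scalev c s u w : bracket (scalev c u) (scalev s w) = c * s * bracket u w.
Proof. by rewrite /bracket /=; ring. Qed.

Lemma bracket_mob h u w : bracket (mob_ev h u) (mob_ev h w) = mob_det h * bracket u w.
Proof. by case: h u w => [[[a b] c] d] [x y] [x' y']; rewrite /bracket /=; ring. Qed.

Lemma bracket_adj h u v : bracket u (mob_ev h v) = bracket (mob_ev (mob_adj h) u) v.
Proof. by case: h u v => [[[a b] c] d] [x y] [x' y']; rewrite /bracket /=; ring. Qed.

Lemma scalev_neq0 c v : c != 0 -> v <> (0, 0) -> scalev c v <> (0, 0).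
Proof.
case: v => x y c0 /pair_neq0 xy0; apply/pair_neq0.
by rewrite /scalev /= !mulf_eq0 (negbTE c0).
Qed.

Lemma mob_ev_neq0 h v : mob_det h != 0 -> v <> (0, 0) -> mob_ev h v <> (0, 0).
Proof.
move=> h0 v0 hv0; apply: (scalev_neq0 h0 v0).
by rewrite -mob_ev_adjK hv0; case: (mob_adj h) => [[[a b] c] d] /=; congr (_, _); ring.
Qed.

Lemma hev_conj h F w : hev (hmap_conj h F) w = mob_ev h (hev F (mob_ev (mob_adj h) w)).
Proof.
by case: h F w => [[[h1 h2] h3] h4] [[[a b] c] [[d e] f]] [x y]; rewrite /hev /=; congr (_, _); ring.
Qed.

Lemma rat2_conj h F : mob_det h != 0 -> is_rat2 F -> is_rat2 (hmap_conj h F).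
Proof.
move=> h0 HF w w0; rewrite hev_conj; apply: mob_ev_neq0 => //.
by apply: HF; apply: mob_ev_neq0; rewrite ?mob_det_adj.
Qed.

Lemma commutes_conj h g F :
  mob_det h != 0 -> commutes g F -> commutes (mob_conj h g) (hmap_conj h F).
Proof.
move=> h0 gF w w0; set u := mob_ev (mob_adj h) w.
have u0 : u <> (0, 0) by apply: mob_ev_neq0; rewrite ?mob_det_adj.
rewrite /same_point !mob_ev_conj !hev_conj -/u !mob_ev_adjK.
rewrite hev_scalev !mob_ev_scalev.
by rewrite -[_ - _]/(bracket _ _) bracket_scalev bracket_mob [bracket _ _](gF u u0) !mulr0.
Qed.

Lemma mob_is_id_conj h g : mob_is_id g -> mob_is_id (mob_conj h g).
Proof.
case: h g => [[[a b] c] d] [[[al be] ga] de] [-> [-> ->]] /=.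
by split; [|split]; ring.
Qed.

Lemma mob_conj_adjK h g : mob_conj (mob_adj h) (mob_conj h g) = mob_scale (mob_det h ^+ 2) g.
Proof.
by case: h g => [[[a b] c] d] [[[al be] ga] de] /=; congr (_, _, _, _); ring.
Qed.

Lemma mob_is_id_scale c g : c != 0 -> mob_is_id (mob_scale c g) -> mob_is_id g.
Proof.
case: g => [[[al be] ga] de] c0 /= [cb [cg cad]].
by split; [|split]; apply: (mulfI c0); rewrite ?mulr0.
Qed.

Lemma mob_conj_nonid h g : mob_det h != 0 -> ~ mob_is_id g -> ~ mob_is_id (mob_conj h g).
Proof.
move=> h0 g1 /(mob_is_id_conj (mob_adj h)); rewrite mob_conj_adjK.
by move/(mob_is_id_scale (expf_neq0 2 h0)).
Qed.

End MobiusAction.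

Section Multipliers.
Variable C : numClosedFieldType.
Implicit Types (a b c d e f k m x y : C) (u v w : pt C) (F : hmap C) (h : mob C).

Definition fixpoly_splits F k v1 v2 v3 :=
  forall x y, fixpoly F (x, y) = k * (bracket (x, y) v1 * bracket (x, y) v2 * bracket (x, y) v3).

Lemma fixed_pointsE F v1 v2 v3 :
  fixed_points F v1 v2 v3 <->
  [/\ v1 <> (0, 0), v2 <> (0, 0), v3 <> (0, 0) &
      exists2 k, k != 0 & fixpoly_splits F k v1 v2 v3].
Proof.
by split=> -[n1 n2 n3 [k k0 Fk]]; split=> //; exists k => // x y; rewrite Fk /bracket /=; ring.
Qed.

Lemma fixpoly_splits_coef a b c d e f k x1 y1 x2 y2 x3 y3 :
  fixpoly_splits ((a, b, c), (d, e, f)) k (x1, y1) (x2, y2) (x3, y3) ->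
  [/\ d = - (k * (y1 * y2 * y3)),
      a = e - k * (x1 * y2 * y3 + y1 * x2 * y3 + y1 * y2 * x3),
      b = f + k * (x1 * x2 * y3 + x1 * y2 * x3 + y1 * x2 * x3) &
      c = - (k * (x1 * x2 * x3))].
Proof.
move=> Fk; have [] := @binary_cubic_eq0 C
  (- d - k * (y1 * y2 * y3)) (a - e + k * (x1 * y2 * y3 + y1 * x2 * y3 + y1 * y2 * x3))
  (b - f - k * (x1 * x2 * y3 + x1 * y2 * x3 + y1 * x2 * x3)) (c + k * (x1 * x2 * x3)).
  move=> x y; have /eqP := Fk x y; rewrite -subr_eq0 => /eqP <-.
  by rewrite /fixpoly /bracket /=; ring.
move=> h3 h2 h1 h0; split; apply/eqP; rewrite -subr_eq0; apply/eqP.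
- by rewrite -[RHS]oppr0 -h3; ring.
- by rewrite -h2; ring.
- by rewrite -h1; ring.
- by rewrite -h0; ring.
Qed.

Lemma fixpoly_splits_root F k v1 v2 v3 : fixpoly_splits F k v1 v2 v3 -> fixpoly F v1 = 0.
Proof.
case: v1 => x y Fk; rewrite Fk /bracket /=.
by rewrite [x * y - _](_ : _ = 0) ?mul0r ?mulr0 //; ring.
Qed.

Lemma fixpoly_splits_swap12 F k v1 v2 v3 :
  fixpoly_splits F k v1 v2 v3 -> fixpoly_splits F k v2 v1 v3.
Proof. by move=> Fk x y; rewrite Fk; ring. Qed.

Lemma fixpoly_splits_swap13 F k v1 v2 v3 :
  fixpoly_splits F k v1 v2 v3 -> fixpoly_splits F k v3 v2 v1.
Proof. by move=> Fk x y; rewrite Fk; ring. Qed.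

Definition fixed_scale F v : C :=
  if v.2 != 0 then (hev F v).2 / v.2 else (hev F v).1 / v.1.

Lemma hev_fixed_scale F v :
  v <> (0, 0) -> fixpoly F v = 0 -> hev F v = scalev (fixed_scale F v) v.
Proof.
case: v => x y /pair_neq0 v0; rewrite /fixed_scale /fixpoly /hev /scalev /=.
move: (eval2 F.1 (x, y)) (eval2 F.2 (x, y)) => P Q E.
have [y0 | y0] /= := eqVneq y 0.
  move: v0 E; rewrite y0 eqxx orbF mul0r sub0r => x0 /eqP.
  by rewrite oppr_eq0 mulf_eq0 (negbTE x0) => /eqP->; congr (_, _); field.
have -> : P = x * Q / y by apply: (mulfI y0); rewrite -[y * P]subr0 -E; field.
by congr (_, _); field.
Qed.

Lemma fixed_scale_eq F v m : v <> (0, 0) -> hev F v = scalev m v -> fixed_scale F v = m.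
Proof.
case: v => x y /pair_neq0 v0; rewrite /fixed_scale /hev /scalev /= => -[-> ->].
by have [y0 | y0] := eqVneq y 0; [move: v0; rewrite y0 eqxx orbF | ]; move=> *; field.
Qed.

Lemma fixed_scale_neq0 F v :
  is_rat2 F -> v <> (0, 0) -> fixpoly F v = 0 -> fixed_scale F v != 0.
Proof.
move=> HF v0 Fv; apply/eqP => l0; apply: (HF v v0).
by rewrite hev_fixed_scale // l0 /scalev !mul0r.
Qed.

Lemma multiplier_finite a b c d e f x y : y != 0 ->
  multiplier ((a, b, c), (d, e, f)) (x, y) =
  ((a * e - b * d) * (x / y) ^+ 2 + 2 * (a * f - c * d) * (x / y) + (b * f - c * e))
  / (d * (x / y) ^+ 2 + e * (x / y) + f) ^+ 2.
Proof.
move=> y0; rewrite /multiplier ifT //= /ratderiv /dehom0 !derivE !hornerE /=.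
by congr (_ / _); ring.
Qed.

Lemma multiplier_infty a b c d e f x :
  multiplier ((a, b, c), (d, e, f)) (x, 0) = (e * a - d * b) / a ^+ 2.
Proof.
rewrite /multiplier /= eqxx /ratderiv /dehomInf !derivE !hornerE /=.
by congr (_ / _); ring.
Qed.

(* Under conjugation by h both brackets scale by det h and fixed_scale by
   (det h)^2, so this formula makes multipliers conjugation invariant. *)
Lemma multiplier_splits F k v1 v2 v3 :
  is_rat2 F -> v1 <> (0, 0) -> fixpoly_splits F k v1 v2 v3 ->
  multiplier F v1 = 1 + k * bracket v1 v2 * bracket v1 v3 / fixed_scale F v1.
Proof.
move=> HF v10 Fk; have l0 := fixed_scale_neq0 HF v10 (fixpoly_splits_root Fk).
move: HF v10 Fk l0; case: F v1 v2 v3 => [[[a b] c] [[d e] f]] [x1 y1] [x2 y2] [x3 y3].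
move=> HF v10 Fk l0; have [y0 | y0] := eqVneq y1 0.
  subst y1; move: v10 l0; rewrite /fixed_scale eqxx /= => /pair_neq0.
  rewrite eqxx orbF => x0 l0.
  have a0 : a != 0 by apply: contraNneq l0 => ->; rewrite expr0n /= !(mul0r, mulr0, addr0).
  rewrite multiplier_infty /bracket /=; case: (fixpoly_splits_coef Fk) a0 => -> -> -> -> a0.
  by field; rewrite x0; move: a0; rewrite !(mul0r, addr0).
rewrite multiplier_finite // /fixed_scale y0 /= in l0 *.
have Q0 : d * x1 ^+ 2 + e * x1 * y1 + f * y1 ^+ 2 != 0.
  by apply: contraNneq l0 => ->; rewrite mul0r.
have -> : d * (x1 / y1) ^+ 2 + e * (x1 / y1) + f = (d * x1 ^+ 2 + e * x1 * y1 + f * y1 ^+ 2) / y1 ^+ 2.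
  by field.
move: Q0; case: (fixpoly_splits_coef Fk) => -> -> -> -> Q0.
by rewrite /bracket /=; field; rewrite Q0 y0.
Qed.

Lemma fixpoly_conj h F w : fixpoly (hmap_conj h F) w = fixpoly F (mob_ev (mob_adj h) w).
Proof.
by case: h F w => [[[h1 h2] h3] h4] [[[a b] c] [[d e] f]] [x y]; rewrite /fixpoly /=; ring.
Qed.

Lemma fixpoly_splits_conj h F k v1 v2 v3 :
  fixpoly_splits F k v1 v2 v3 ->
  fixpoly_splits (hmap_conj h F) k (mob_ev h v1) (mob_ev h v2) (mob_ev h v3).
Proof.
by move=> Fk x y; rewrite fixpoly_conj !bracket_adj; case: (mob_ev _ (x, y)).
Qed.

Lemma fixed_scale_conj h F v : mob_det h != 0 -> v <> (0, 0) -> fixpoly F v = 0 ->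
  fixed_scale (hmap_conj h F) (mob_ev h v) = mob_det h ^+ 2 * fixed_scale F v.
Proof.
move=> h0 v0 Fv; apply: fixed_scale_eq; first exact: mob_ev_neq0.
by rewrite hev_conj mob_ev_adjK hev_scalev hev_fixed_scale // !mob_ev_scalev !scalevA.
Qed.

Lemma multiplier_conj h F k v1 v2 v3 :
  mob_det h != 0 -> is_rat2 F -> v1 <> (0, 0) -> fixpoly_splits F k v1 v2 v3 ->
  multiplier (hmap_conj h F) (mob_ev h v1) = multiplier F v1.
Proof.
move=> h0 HF v10 Fk; have Fv1 := fixpoly_splits_root Fk.
rewrite (multiplier_splits (rat2_conj h0 HF) (mob_ev_neq0 h0 v10) (fixpoly_splits_conj h Fk)).
rewrite (multiplier_splits HF v10 Fk) !bracket_mob fixed_scale_conj //.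
by field; rewrite h0 fixed_scale_neq0.
Qed.

Lemma sigmas_conj h F s1 s2 :
  mob_det h != 0 -> is_rat2 F -> sigmas F s1 s2 -> sigmas (hmap_conj h F) s1 s2.
Proof.
move=> h0 HF [v1 [v2 [v3 [/fixed_pointsE[n1 n2 n3 [k k0 Fk]] /= [-> ->]]]]].
exists (mob_ev h v1), (mob_ev h v2), (mob_ev h v3); split.
  by apply/fixed_pointsE; split; try exact: mob_ev_neq0; exists k => //; apply: fixpoly_splits_conj.
rewrite /= (multiplier_conj h0 HF n1 Fk) (multiplier_conj h0 HF n2 (fixpoly_splits_swap12 Fk)).
by rewrite (multiplier_conj h0 HF n3 (fixpoly_splits_swap13 Fk)).
Qed.

End Multipliers.

Section NormalForms.
Variable C : numClosedFieldType.
Implicit Types (a b c d e f k x y : C) (v : pt C).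

(* z |-> (a z^2 + c) / (e z): the quadratic maps commuting with z |-> -z *)
Definition odd_map a c e : hmap C := ((a, 0, c), (0, e, 0)).

(* z |-> c / (d z^2): the quadratic maps commuting with z |-> w z, w^3 = 1 *)
Definition inv_sq_form c d : hmap C := ((0, 0, c), (d, 0, 0)).

Lemma rat2_odd_map a c e : is_rat2 (odd_map a c e) <-> [/\ a != 0, c != 0 & e != 0].
Proof.
split=> [HF | [a0 c0 e0] [x y] /pair_neq0 v0 [/eqP P0 /eqP Q0]].
  split; apply/eqP => z0.
  - exact: rat2_at_infty HF z0 erefl.
  - exact: rat2_at_zero HF z0 erefl.
  - by apply: (rat2_den_neq0 HF); rewrite /= z0.
have xy0 : x * y = 0.
  by apply: (mulfI e0); move/eqP: Q0; rewrite /= mulr0 !mul0r addr0 add0r mulrA.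
case/mulf_eq0_or: xy0 => z0; move: v0 P0; rewrite /= z0 eqxx ?orbF /=;
  by rewrite !(mul0r, mulr0, expr0n, add0r, addr0) mulf_eq0 expf_eq0 ?(negbTE a0) ?(negbTE c0)
     => /negbTE->.
Qed.

Lemma rat2_inv_sq_form c d : is_rat2 (inv_sq_form c d) <-> c != 0 /\ d != 0.
Proof.
split=> [HF | [c0 d0] [x y] /pair_neq0 v0 [/eqP P0 /eqP Q0]].
  by split; apply/eqP => z0; [apply: rat2_at_zero HF z0 _ | apply: rat2_at_infty HF _ z0].
move: v0 P0 Q0; rewrite /= !(mul0r, mulr0, add0r, addr0) !mulf_eq0 (negbTE c0) (negbTE d0) /= !orbb.
by case/orP=> /negbTE->.
Qed.

Lemma odd_map_multiplier a c e v :
  a != 0 -> c != 0 -> e != 0 -> fixpoly (odd_map a c e) v = 0 ->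
  multiplier (odd_map a c e) v = if v.2 == 0 then e / a else 2 * a / e - 1.
Proof.
case: v => x y a0 c0 e0 /= Fv; have [y0 | y0] := eqVneq y 0.
  by rewrite y0 multiplier_infty; field.
have {}Fv : (e - a) * x ^+ 2 = c * y ^+ 2.
  apply: (mulfI y0); apply/eqP; rewrite -subr_eq0; apply/eqP.
  by rewrite -[RHS]oppr0 -Fv /fixpoly /=; ring.
have x0 : x != 0.
  by apply: contra_neq (mulf_neq0 c0 (expf_neq0 2 y0)) => x0; rewrite -Fv x0 expr0n mulr0.
have -> : c = (e - a) * x ^+ 2 / y ^+ 2 by rewrite Fv; field.
by rewrite multiplier_finite //; field; rewrite e0 x0 y0.
Qed.

Lemma one_of_three_eq0 x1 y1 x2 y2 x3 y3 :
  y1 * y2 * y3 = 0 -> x1 * y2 * y3 + y1 * x2 * y3 + y1 * y2 * x3 != 0 ->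
  [\/ [/\ y1 = 0, y2 != 0 & y3 != 0], [/\ y1 != 0, y2 = 0 & y3 != 0]
    | [/\ y1 != 0, y2 != 0 & y3 = 0]].
Proof.
have [-> | y1n] := eqVneq y1 0.
  by rewrite !(mulr0, mul0r, addr0) !mulf_eq0 !negb_or => _ /andP[/andP[_ ?] ?]; apply: Or31.
have [-> | y2n] := eqVneq y2 0.
  by rewrite !(mulr0, mul0r, addr0, add0r) !mulf_eq0 !negb_or => _ /andP[_ ?]; apply: Or32.
move=> /mulf_eq0_or[/mulf_eq0_or[] | y30 _]; last by apply: Or33.
- by move=> y10; rewrite y10 eqxx in y1n.
- by move=> y20; rewrite y20 eqxx in y2n.
Qed.

Lemma odd_map_esym_multipliers a c e v1 v2 v3 :
  a != 0 -> c != 0 -> e != 0 -> fixed_points (odd_map a c e) v1 v2 v3 ->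
  let m1 := multiplier (odd_map a c e) v1 in let m2 := multiplier (odd_map a c e) v2 in
  let m3 := multiplier (odd_map a c e) v3 in
  (m1 + m2 + m3, m1 * m2 + m1 * m3 + m2 * m3) = param (a / e).
Proof.
move=> a0 c0 e0 /fixed_pointsE[_ _ _ [k k0 Fk]] /=.
have M := odd_map_multiplier a0 c0 e0.
rewrite (M _ (fixpoly_splits_root Fk)) (M _ (fixpoly_splits_root (fixpoly_splits_swap12 Fk))).
rewrite (M _ (fixpoly_splits_root (fixpoly_splits_swap13 Fk))) /param.
have [<- | ae] := eqVneq a e.
  have -> : 2 * a / a - 1 = 1 by field.
  by rewrite divff // !if_same; congr (_, _); field.
(* Unless a = e, exactly one fixed point lies at infinity. *)
move: Fk; case: v1 v2 v3 => [x1 y1] [x2 y2] [x3 y3] /fixpoly_splits_coef[d0 aE _ _] /=.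
have Y : y1 * y2 * y3 = 0.
  by apply: (mulfI k0); rewrite mulr0 -[LHS]opprK -d0 oppr0.
have X : x1 * y2 * y3 + y1 * x2 * y3 + y1 * y2 * x3 != 0.
  by apply: contra_neq ae => X; rewrite aE X mulr0 subr0.
case: (one_of_three_eq0 Y X) => -[h1 h2 h3] /=.
- by rewrite h1 eqxx (negbTE h2) (negbTE h3); congr (_, _); field; rewrite a0 e0.
- by rewrite (negbTE h1) h2 eqxx (negbTE h3); congr (_, _); field; rewrite a0 e0.
- by rewrite (negbTE h1) (negbTE h2) h3 eqxx; congr (_, _); field; rewrite a0 e0.
Qed.

Lemma inv_sq_form_multiplier c d v : c != 0 -> d != 0 -> v <> (0, 0) ->
  fixpoly (inv_sq_form c d) v = 0 -> multiplier (inv_sq_form c d) v = -2.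
Proof.
case: v => x y c0 d0 /pair_neq0 v0 Fv.
have {}Fv : d * x ^+ 3 = c * y ^+ 3.
  by apply/eqP; rewrite -subr_eq0; apply/eqP; rewrite -[RHS]oppr0 -Fv /fixpoly /=; ring.
have [y0 | y0] := eqVneq y 0.
  move: Fv v0; rewrite y0 expr0n mulr0 eqxx orbF => /eqP.
  by rewrite mulf_eq0 (negbTE d0) expf_eq0 /= => /eqP->; rewrite eqxx.
have x0 : x != 0.
  by apply: contra_neq (mulf_neq0 c0 (expf_neq0 3 y0)) => x0; rewrite -Fv x0 expr0n mulr0.
have -> : c = d * x ^+ 3 / y ^+ 3 by rewrite Fv; field.
by rewrite multiplier_finite //; field; rewrite d0 x0 y0.
Qed.

Lemma inv_sq_form_esym_multipliers c d v1 v2 v3 :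
  c != 0 -> d != 0 -> fixed_points (inv_sq_form c d) v1 v2 v3 ->
  let m1 := multiplier (inv_sq_form c d) v1 in let m2 := multiplier (inv_sq_form c d) v2 in
  let m3 := multiplier (inv_sq_form c d) v3 in
  (m1 + m2 + m3, m1 * m2 + m1 * m3 + m2 * m3) = (-6, 12).
Proof.
move=> c0 d0 /fixed_pointsE[n1 n2 n3 [k k0 Fk]] /=; have M := inv_sq_form_multiplier c0 d0.
rewrite (M _ n1 (fixpoly_splits_root Fk)) (M _ n2 (fixpoly_splits_root (fixpoly_splits_swap12 Fk))).
by rewrite (M _ n3 (fixpoly_splits_root (fixpoly_splits_swap13 Fk))); congr (_, _); ring.
Qed.

Lemma sigmas_odd_map a c e s1 s2 : a != 0 -> c != 0 -> e != 0 ->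
  sigmas (odd_map a c e) s1 s2 -> (s1, s2) = param (a / e).
Proof.
by move=> a0 c0 e0 [v1 [v2 [v3 [/(odd_map_esym_multipliers a0 c0 e0) /= <- [-> ->]]]]].
Qed.

Lemma sigmas_inv_sq_form c d s1 s2 : c != 0 -> d != 0 ->
  sigmas (inv_sq_form c d) s1 s2 -> (s1, s2) = (-6, 12).
Proof.
by move=> c0 d0 [v1 [v2 [v3 [/(inv_sq_form_esym_multipliers c0 d0) /= <- [-> ->]]]]].
Qed.

End NormalForms.

Section Classification.
Variable C : numClosedFieldType.
Implicit Types (a b c d e f k t al be ga de : C) (F : hmap C) (g h : mob C).

Lemma rat2_af_neq_be a b e f :
  is_rat2 ((a, b, 0), (0, e, f)) -> a != 0 -> a * f - b * e != 0.
Proof.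
move=> HF a0; apply/eqP => key; apply: (rat2_common_zero (v := (b, - a)) HF).
- by apply/pair_neq0; rewrite oppr_eq0 a0 orbT.
- by rewrite /=; ring.
- by transitivity (a * (a * f - b * e)); [rewrite /=; ring | rewrite key mulr0].
Qed.

Lemma rat2_cd_neq_be b c d e :
  is_rat2 ((0, b, c), (d, e, 0)) -> c != 0 -> c * d - b * e != 0.
Proof.
move=> HF c0; apply/eqP => key; apply: (rat2_common_zero (v := (c, - b)) HF).
- by apply/pair_neq0; rewrite c0.
- by rewrite /=; ring.
- by transitivity (c * (c * d - b * e)); [rewrite /=; ring | rewrite key mulr0].
Qed.

Lemma commutes_diag_coef a b c d e f al ga :
  al != 0 -> ga != 0 -> al != ga -> commutes (al, 0, 0, ga) ((a, b, c), (d, e, f)) ->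
  [/\ a * d = 0, c * f = 0, (al + ga) * (b * d) = 0, (al + ga) * (c * e) = 0 &
      c * d * (al ^+ 2 + al * ga + ga ^+ 2) + al * ga * (b * e - a * f) = 0].
Proof.
move=> al0 ga0 alga gF; have {}alga : al - ga != 0 by rewrite subr_eq0.
have [] := @binary_quartic_eq0 C
  (a * d * (al ^+ 2 * (al - ga))) ((al + ga) * (b * d) * (al * (al - ga)))
  ((c * d * (al ^+ 2 + al * ga + ga ^+ 2) + al * ga * (b * e - a * f)) * (al - ga))
  ((al + ga) * (c * e) * (ga * (al - ga))) (c * f * (ga ^+ 2 * (al - ga))).
  by move=> x y xy0; rewrite -(gF (x, y) xy0) /binary_quartic /same_point /=; ring.
move=> h4 h3 h2 h1 h0; split; [move: h4 | move: h0 | move: h3 | move: h1 | move: h2];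
  by move/mulf_eq0_cancelr; apply; rewrite ?mulf_neq0 ?expf_neq0.
Qed.

Lemma commutes_parabolic_not_rat2 F t be :
  is_rat2 F -> t != 0 -> be != 0 -> ~ commutes (t, be, 0, t) F.
Proof.
case: F => [[[a b] c] [[d e] f]] HF t0 be0 gF.
have [] := @binary_quartic_eq0 C (d * d * (be * t ^+ 2))
  (2 * be * d * e * t ^+ 2 + 2 * be ^+ 2 * d ^+ 2 * t)
  (- be * a * e * t ^+ 2 + be * b * d * t ^+ 2 + 2 * be * d * f * t ^+ 2 + be * e ^+ 2 * t ^+ 2
     + 3 * be ^+ 2 * d * e * t + be ^+ 3 * d ^+ 2)
  (- 2 * be * a * f * t ^+ 2 + 2 * be * c * d * t ^+ 2 + 2 * be * e * f * t ^+ 2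
     - be ^+ 2 * a * e * t + be ^+ 2 * b * d * t + 2 * be ^+ 2 * d * f * t
     + be ^+ 2 * e ^+ 2 * t + be ^+ 3 * d * e)
  (- be * b * f * t ^+ 2 + be * c * e * t ^+ 2 + be * f ^+ 2 * t ^+ 2 - be ^+ 2 * a * f * t
     + be ^+ 2 * c * d * t + be ^+ 2 * e * f * t + be ^+ 3 * d * f).
  by move=> x y xy0; rewrite -(gF (x, y) xy0) /binary_quartic /same_point /=; ring.
have bt : be * t ^+ 2 != 0 by rewrite mulf_neq0 ?expf_neq0.
move=> /mulf_eq0_cancelr /(_ bt) /eqP; rewrite mulf_eq0 orbb => /eqP d0 _ h2 h1 h0; subst d.
have a0 : a != 0 by apply/eqP => a0; apply: rat2_at_infty HF a0 erefl.
have : e * (e - a) * (be * t ^+ 2) = 0 by rewrite -[RHS]h2; ring.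
move/mulf_eq0_cancelr/(_ bt)/mulf_eq0_or => [e0 | /subr0_eq ea]; subst e.
  have : a * f * (- 2 * (be * t ^+ 2)) = 0 by rewrite -[RHS]h1; ring.
  have n2 : - 2 * (be * t ^+ 2) != 0 by rewrite mulf_neq0 // oppr_eq0 pnatr_eq0.
  move/mulf_eq0_cancelr/(_ n2)/mulf_eq0_or => [a0' | f0].
    by rewrite a0' eqxx in a0.
  by apply: (rat2_den_neq0 HF); rewrite f0.
have : (c * a - b * f + f ^+ 2) * (be * t ^+ 2) = 0 by rewrite -[RHS]h0; ring.
move/mulf_eq0_cancelr/(_ bt) => key; apply: (rat2_common_zero (v := (f, - a)) HF).
- by apply/pair_neq0; rewrite oppr_eq0 a0 orbT.
- by transitivity (a * (c * a - b * f + f ^+ 2)); [rewrite /=; ring | rewrite key mulr0].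
- by rewrite /=; ring.
Qed.

Lemma rat2_odd_cases a b c d e f : is_rat2 ((a, b, c), (d, e, f)) ->
  a * d = 0 -> c * f = 0 -> c * d - b * e + a * f = 0 ->
  [/\ b = 0, d = 0 & f = 0] \/ [/\ a = 0, c = 0 & e = 0].
Proof.
move=> HF ad cf key; have [c0 | c0] := eqVneq c 0; subst.
  have f0 : f != 0 by apply/eqP; apply: rat2_at_zero HF erefl.
  have [a0 | a0] := eqVneq a 0; subst.
    have d0 : d != 0 by apply/eqP; apply: rat2_at_infty HF erefl.
    have be0 : b * e = 0 by rewrite -[RHS]oppr0 -key; ring.
    case/mulf_eq0_or: be0 => [b0 | e0]; last by right.
    by exfalso; apply: (rat2_num_neq0 HF); rewrite b0.
  have d0 := mulf_eq0_cancell ad a0; subst.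
  by case/negP: (rat2_af_neq_be HF a0); apply/eqP; rewrite -[RHS]key; ring.
have f0 := mulf_eq0_cancell cf c0; subst.
have [a0 | a0] := eqVneq a 0; subst.
  by case/negP: (rat2_cd_neq_be HF c0); apply/eqP; rewrite -[RHS]key; ring.
have d0 := mulf_eq0_cancell ad a0; subst.
have be0 : b * e = 0 by rewrite -[RHS]oppr0 -key; ring.
case/mulf_eq0_or: be0 => [b0 | e0]; first by left.
by exfalso; apply: (rat2_den_neq0 HF); rewrite e0.
Qed.

Lemma rat2_order3_cases a b c d e f : is_rat2 ((a, b, c), (d, e, f)) ->
  a * d = 0 -> c * f = 0 -> b * d = 0 -> c * e = 0 -> (c = 0 -> a * f - b * e = 0) ->
  [/\ a = 0, b = 0, e = 0 & f = 0].
Proof.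
move=> HF ad cf bd ce key; have [c0 | c0] := eqVneq c 0.
  subst; exfalso; have f0 : f != 0 by apply/eqP; apply: rat2_at_zero HF erefl.
  have [a0 | a0] := eqVneq a 0; subst.
    have d0 : d != 0 by apply/eqP; apply: rat2_at_infty HF erefl.
    by apply: (rat2_num_neq0 HF); rewrite (mulf_eq0_cancelr bd d0).
  have d0 := mulf_eq0_cancell ad a0; subst.
  by case/negP: (rat2_af_neq_be HF a0); apply/eqP; apply: key.
have f0 := mulf_eq0_cancell cf c0; have e0 := mulf_eq0_cancell ce c0; subst.
have d0 : d != 0 by apply/eqP => d0; apply: (rat2_den_neq0 HF); rewrite d0.
by rewrite (mulf_eq0_cancelr ad d0) (mulf_eq0_cancelr bd d0).
Qed.

Definition mob_swap : mob C := (0, 1, 1, 0).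

Lemma mob_det_swap : mob_det mob_swap != 0.
Proof. by rewrite /= mul0r sub0r mulr1 oppr_eq0 oner_eq0. Qed.

Lemma hmap_conj_swap b d f : hmap_conj mob_swap ((0, b, 0), (d, 0, f)) = odd_map f d b.
Proof. by rewrite /hmap_conj /mob_swap /odd_map /=; congr (_, _, _, (_, _, _)); ring. Qed.

Lemma param_neg_half : param (- 2^-1) = (-6, 12) :> C * C.
Proof. by rewrite /param; congr (_, _); field. Qed.

Lemma diag_aut_sigmas F al ga s1 s2 :
  is_rat2 F -> al != 0 -> ga != 0 -> al != ga -> commutes (al, 0, 0, ga) F ->
  sigmas F s1 s2 -> exists2 k, k != 0 & (s1, s2) = param k.
Proof.
case: F => [[[a b] c] [[d e] f]] HF al0 ga0 alga gF Fs.
have [ad cf bd ce key] := commutes_diag_coef al0 ga0 alga gF.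
have [ga_al | ga_al] := eqVneq (al + ga) 0.
  have {}key : c * d - b * e + a * f = 0.
    apply: mulf_eq0_cancelr (expf_neq0 2 al0); rewrite -[RHS]key.
    by rewrite (_ : ga = - al); [ring | apply/eqP; rewrite -addr_eq0 addrC ga_al].
  have [[b0 d0 f0] | [a0 c0 e0]] := rat2_odd_cases HF ad cf key; subst.
    have [a0 c0 e0] := (rat2_odd_map a c e).1 HF.
    by rewrite (sigmas_odd_map a0 c0 e0 Fs); exists (a / e); rewrite ?mulf_neq0 ?invr_eq0.
  have HF' := rat2_conj mob_det_swap HF; rewrite hmap_conj_swap in HF'.
  have [f0 d0 b0] := (rat2_odd_map f d b).1 HF'.
  have := sigmas_conj mob_det_swap HF Fs; rewrite hmap_conj_swap.
  by move/(sigmas_odd_map f0 d0 b0) => ->; exists (f / b); rewrite ?mulf_neq0 ?invr_eq0.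
have [|a0 b0 e0 f0] := rat2_order3_cases HF ad cf (mulf_eq0_cancell bd ga_al)
  (mulf_eq0_cancell ce ga_al).
  move=> c0; apply/eqP; rewrite -oppr_eq0 opprB; apply/eqP.
  by apply: (mulf_eq0_cancell _ (mulf_neq0 al0 ga0)); rewrite -[RHS]key c0; ring.
subst; have [c0 d0] := (rat2_inv_sq_form c d).1 HF.
exists (- 2^-1); first by rewrite oppr_eq0 invr_eq0 pnatr_eq0.
by rewrite param_neg_half (sigmas_inv_sq_form c0 d0 Fs).
Qed.

Lemma mob_triangularize g : exists2 h, mob_det h != 0 & (mob_conj h g).1.2 = 0.
Proof.
case: g => [[[al be] ga] de]; have [-> | ga0] := eqVneq ga 0.
  by exists (1, 0, 0, 1); rewrite /= ?mulr1 ?mulr0 ?subr0 ?oner_eq0 //; ring.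
have [t tE] := quadratic_root (- (al + de)) (al * de - be * ga).
exists (0, -1, - ga, t - de); first by rewrite /= mul0r sub0r mulN1r opprK oppr_eq0.
by rewrite /= -[RHS](mulr0 ga) -tE; ring.
Qed.

Lemma mob_conj_diagonalize al be de :
  al != de -> mob_conj (1, be / (al - de), 0, 1) (al, be, 0, de) = (al, 0, 0, de).
Proof. by rewrite -subr_eq0 => alde; rewrite /= ; congr (_, _, _, _); field. Qed.

Lemma nontriv_aut_sigmas F s1 s2 :
  is_rat2 F -> has_nontriv_aut F -> sigmas F s1 s2 -> exists2 k, k != 0 & (s1, s2) = param k.
Proof.
move=> HF [g [/eqP g0 [g1 gF]]] Fs; have [h h0 hg] := mob_triangularize g.
have := mob_det_conj h g; have := mob_conj_nonid h0 g1; have := commutes_conj h0 gF.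
move: (rat2_conj h0 HF) (sigmas_conj h0 HF Fs) hg; set F1 := hmap_conj h F.
case: (mob_conj h g) => [[[al be] ga] de] HF1 Fs1 /= -> gF1 g1' gdet.
have : al * de != 0 by move: gdet; rewrite mulr0 subr0 => ->; rewrite mulf_neq0 ?expf_neq0.
rewrite mulf_eq0 negb_or => /andP[al0 de0].
have [alde | alde] := eqVneq al de.
  have be0 : be != 0 by apply/eqP => be0; apply: g1'; rewrite be0 alde.
  by rewrite -alde in gF1; case: (commutes_parabolic_not_rat2 HF1 al0 be0 gF1).
have h20 : mob_det (1, be / (al - de), 0, 1) != 0 by rewrite /= mulr1 mulr0 subr0 oner_eq0.
have := commutes_conj h20 gF1; rewrite mob_conj_diagonalize // => gF2.
exact: diag_aut_sigmas (rat2_conj h20 HF1) al0 de0 alde gF2 (sigmas_conj h20 HF1 Fs1).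
Qed.

End Classification.

Section SymmetricMaps.
Variable C : numClosedFieldType.
Implicit Types (a c e k : C).

Lemma nontriv_aut_odd_map a c e : has_nontriv_aut (odd_map a c e).
Proof.
exists (-1, 0, 0, 1); split; [|split].
- by apply/eqP; rewrite /= mulr1 mulr0 subr0 oppr_eq0 oner_eq0.
- by move=> [_ [_ /eqP]]; rewrite eqNr oner_eq0.
- by move=> [x y] _; rewrite /same_point /hev /=; ring.
Qed.

Lemma odd_map_fixed_points k : k != 0 ->
  exists v1, exists v2, exists v3, fixed_points (odd_map k k 1) v1 v2 v3.
Proof.
move=> k0; have n1 (x : C) : (x, 1 : C) <> (0, 0) by apply/pair_neq0; rewrite oner_eq0 orbT.
have n10 : ((1 : C), (0 : C)) <> (0, 0) by apply/pair_neq0; rewrite oner_eq0.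
have [-> | k1] := eqVneq k 1.
  exists (1, 0), (1, 0), (1, 0); apply/fixed_pointsE; split=> //.
  by exists (-1); rewrite ?oppr_eq0 ?oner_eq0 // => x y; rewrite /fixpoly /bracket /=; ring.
have k1' : 1 - k != 0 by rewrite subr_eq0 eq_sym.
set r := sqrtC (k / (1 - k)); have rE : r ^+ 2 * (1 - k) = k by rewrite sqrtCK; field.
exists (1, 0), (r, 1), (- r, 1); apply/fixed_pointsE; split=> //.
exists (1 - k) => // x y; rewrite /fixpoly /bracket /=.
by transitivity ((k - 1) * x ^+ 2 * y + r ^+ 2 * (1 - k) * y ^+ 3); [rewrite rE | ]; ring.
Qed.

Lemma param_in_symmetry_locus k : k != 0 -> symmetry_locus (param k).
Proof.
move=> k0; exists (odd_map k k 1); split; first by apply/rat2_odd_map; split; rewrite ?oner_neq0.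
split; first exact: nontriv_aut_odd_map.
have [v1 [v2 [v3 Fv]]] := odd_map_fixed_points k0.
exists v1, v2, v3; split=> //.
by have := odd_map_esym_multipliers k0 k0 (oner_neq0 C) Fv; rewrite divr1 => <-.
Qed.

Lemma rat2_inv_sq_map : is_rat2 (inv_sq_map C).
Proof. by apply/rat2_inv_sq_form; rewrite oner_eq0. Qed.

Lemma nontriv_aut_inv_sq_map : has_nontriv_aut (inv_sq_map C).
Proof.
exists (mob_swap C); split; first by apply/eqP; exact: mob_det_swap.
split; first by move=> [/eqP]; rewrite oner_eq0.
by move=> [x y] _; rewrite /same_point /hev /=; ring.
Qed.

(* The fixed points of z |-> 1/z^2 are the cube roots of unity. *)
Lemma sigmas_inv_sq_map : sigmas (inv_sq_map C) (-6) 12.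
Proof.
have [w wE] := quadratic_root (1 : C) 1; have one0 := oner_neq0 C.
have n1 (x : C) : (x, 1 : C) <> (0, 0) by apply/pair_neq0; rewrite oner_eq0 orbT.
have Fv : fixed_points (inv_sq_map C) (1, 1) (w, 1) (w ^+ 2, 1).
  apply/fixed_pointsE; split=> //; exists (-1); rewrite ?oppr_eq0 // => x y.
  rewrite /fixpoly /bracket /=; apply: subr0_eq.
  transitivity ((w ^+ 2 + 1 * w + 1) * (w * x * y ^+ 2 - x ^+ 2 * y + (1 - w) * y ^+ 3)).
    by ring.
  by rewrite wE mul0r.
exists (1, 1), (w, 1), (w ^+ 2, 1); split=> //.
by have := inv_sq_form_esym_multipliers one0 one0 Fv => -[<- <-].
Qed.

End SymmetricMaps.

Lemma mderivXii n (R : nzRingType) (i : 'I_n) : ('X_i : {mpoly R[n]})^`M(i) = 1.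
Proof.
rewrite mderivX mnm1E eqxx scale1r.
have -> : (U_(i) - U_(i))%MM = 0%MM by apply/mnmP => l; rewrite mnmBE mnm0E subnn.
by rewrite mpolyX0.
Qed.

Lemma mderivXij n (R : nzRingType) (i j : 'I_n) : i != j -> ('X_i : {mpoly R[n]})^`M(j) = 0.
Proof. by move=> ij; rewrite mderivX mnm1E (negbTE ij) scale0r. Qed.

Lemma mdeg_lt_neq n (m1 m : 'X_{1..n}) : (mdeg m1 < mdeg m)%N -> (m1 == m) = false.
Proof. by move=> lt; apply/negbTE/eqP => eq_m; rewrite eq_m ltnn in lt. Qed.

Section SymmetryCurve.
Variable C : numClosedFieldType.
Implicit Types (d k x y : C) (s : C * C).

Definition sym_curve x y : C :=
  2 * x ^+ 3 + x ^+ 2 * y - x ^+ 2 - 8 * x * y - 4 * y ^+ 2 + 12 * x + 12 * y - 36.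

Definition sym_curve_poly : {mpoly C[2]} :=
  2%:MP * 'X_i1 * 'X_i1 * 'X_i1 + 'X_i1 * 'X_i1 * 'X_i2 - 'X_i1 * 'X_i1
  - 8%:MP * 'X_i1 * 'X_i2 - 4%:MP * 'X_i2 * 'X_i2
  + 12%:MP * 'X_i1 + 12%:MP * 'X_i2 - 36%:MP.

Lemma pt2_i1 s : pt2 s i1 = s.1. Proof. by []. Qed.
Lemma pt2_i2 s : pt2 s i2 = s.2. Proof. by []. Qed.

Local Ltac eval_sym_curve_poly :=
  rewrite /sym_curve_poly ?(mderivD, mderivB, mderivN, mderivM, mderivC, mderivXii, mderivXij) //
    !(mevalD, mevalB, mevalN, mevalM, mevalC, mevalXU) !pt2_i1 !pt2_i2.

Lemma sym_curve_polyE s : sym_curve_poly.@[pt2 s] = sym_curve s.1 s.2.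
Proof. by eval_sym_curve_poly; rewrite /sym_curve; ring. Qed.

Lemma sym_curve_poly_d1 s :
  (sym_curve_poly^`M(i1)).@[pt2 s] = 6 * s.1 ^+ 2 + 2 * s.1 * s.2 - 2 * s.1 - 8 * s.2 + 12.
Proof. by eval_sym_curve_poly; ring. Qed.

Lemma sym_curve_poly_d2 s :
  (sym_curve_poly^`M(i2)).@[pt2 s] = s.1 ^+ 2 - 8 * s.1 - 8 * s.2 + 12.
Proof. by eval_sym_curve_poly; ring. Qed.

Lemma sym_curve_poly_d11 s : (sym_curve_poly^`M(i1)^`M(i1)).@[pt2 s] = 12 * s.1 + 2 * s.2 - 2.
Proof. by eval_sym_curve_poly; ring. Qed.

Lemma sym_curve_poly_d12 s : (sym_curve_poly^`M(i1)^`M(i2)).@[pt2 s] = 2 * s.1 - 8.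
Proof. by eval_sym_curve_poly; ring. Qed.

Lemma sym_curve_poly_d22 s : (sym_curve_poly^`M(i2)^`M(i2)).@[pt2 s] = -8.
Proof. by eval_sym_curve_poly; ring. Qed.

Definition u1 : 'X_{1..2} := U_(i1)%MM.
Definition u2 : 'X_{1..2} := U_(i2)%MM.

Lemma sym_curve_poly_coef m : sym_curve_poly@_m =
  2 * ((u1 + u1 + u1)%MM == m)%:R + ((u1 + u1 + u2)%MM == m)%:R - ((u1 + u1)%MM == m)%:R
  - 8 * ((u1 + u2)%MM == m)%:R - 4 * ((u2 + u2)%MM == m)%:R + 12 * (u1 == m)%:R
  + 12 * (u2 == m)%:R - 36 * (m == 0%MM)%:R.
Proof.
have -> : sym_curve_poly = 2 *: 'X_[(u1 + u1 + u1)%MM] + 'X_[(u1 + u1 + u2)%MM]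
    - 'X_[(u1 + u1)%MM] - 8 *: 'X_[(u1 + u2)%MM] - 4 *: 'X_[(u2 + u2)%MM]
    + 12 *: 'X_[u1] + 12 *: 'X_[u2] - 36%:MP.
  by rewrite !mpolyXD -!mul_mpolyC /sym_curve_poly /u1 /u2; ring.
by rewrite !(mcoeffD, mcoeffB, mcoeffN, mcoeffZ, mcoeffX, mcoeffC).
Qed.

Lemma mdeg_u1 : mdeg u1 = 1%N. Proof. exact: mdeg1. Qed.
Lemma mdeg_u2 : mdeg u2 = 1%N. Proof. exact: mdeg1. Qed.

Lemma msize_sym_curve_poly : msize sym_curve_poly = 4%N.
Proof.
apply/eqP; rewrite eqn_leq; apply/andP; split.
  rewrite msizeE; apply/bigmax_leqP_seq => m supp_m _; rewrite ltnNge; apply/negP => deg_m.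
  move: supp_m; rewrite mcoeff_msupp sym_curve_poly_coef.
  have -> : (m == 0%MM) = false by rewrite eq_sym mdeg_lt_neq ?mdeg0 // (@leq_trans 4).
  rewrite !mdeg_lt_neq; try by rewrite ?(mdegD, mdeg_u1, mdeg_u2); apply: leq_trans deg_m.
  by move/eqP; apply; rewrite /=; ring.
have supp3 : (u1 + u1 + u1)%MM \in msupp sym_curve_poly.
  rewrite mcoeff_msupp sym_curve_poly_coef eqxx.
  have -> : (u1 + u1 + u2 == u1 + u1 + u1)%MM = false.
    apply/negbTE/eqP => /(congr1 (fun m : 'X_{1..2} => m i2)).
    by rewrite !mnmDE /u1 /u2 !mnm1E.
  have -> : (u1 + u1 + u1 == 0)%MM = false.
    by rewrite eq_sym mdeg_lt_neq ?(mdegD, mdeg_u1, mdeg0).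
  rewrite !mdeg_lt_neq ?(mdegD, mdeg_u1, mdeg_u2) //.
  by rewrite !mulr0 !subr0 !addr0 mulr1 pnatr_eq0.
by have := msize_mdeg_lt supp3; rewrite !mdegD mdeg_u1.
Qed.

Lemma sym_curve_no_line m d : ~ (forall t, sym_curve (t : C) (m * t + d) = 0).
Proof.
move=> H.
have e6 : 6%:R * (2 + m) = 0.
  transitivity (sym_curve 3 (m * 3 + d) - 3 * sym_curve 2 (m * 2 + d)
                + 3 * sym_curve 1 (m * 1 + d) - sym_curve 0 (m * 0 + d)).
    by rewrite /sym_curve; ring.
  by rewrite !H; ring.
have {e6} m2 : m = -2 by apply: subr0_eq; rewrite -[RHS](natmul_eq0 e6 isT); ring.
subst m.
have e2 : 2%:R * (d - 1) = 0.
  transitivity (sym_curve 2 (-2 * 2 + d) - 2 * sym_curve 1 (-2 * 1 + d)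
                + sym_curve 0 (-2 * 0 + d)).
    by rewrite /sym_curve; ring.
  by rewrite !H; ring.
have {e2} d1 : d = 1 by apply: subr0_eq; exact: natmul_eq0 e2 isT.
subst d.
have e28 : 28%:R * (1 : C) = 0.
  by transitivity (- sym_curve (0 : C) (-2 * 0 + 1)); [rewrite /sym_curve; ring | rewrite H oppr0].
by move/eqP: (natmul_eq0 e28 isT); rewrite oner_eq0.
Qed.

Lemma sym_curve_no_vertical_line x : ~ (forall t, sym_curve x t = 0).
Proof.
move=> H; have e8 : 8%:R * (1 : C) = 0.
  transitivity (- (sym_curve x 2 - 2 * sym_curve x 1 + sym_curve x 0)).
    by rewrite /sym_curve; ring.
  by rewrite !H; ring.
by move/eqP: (natmul_eq0 e8 isT); rewrite oner_eq0.
Qed.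

Lemma msize_le2_affine (p : {mpoly C[2]}) :
  (msize p <= 2)%N -> p = (p@_0%MM)%:MP + p@_u1 *: 'X_i1 + p@_u2 *: 'X_i2.
Proof.
move=> size_p; apply/mpolyP => m; rewrite !(mcoeffD, mcoeffZ, mcoeffC, mcoeffX).
have [deg_m | deg_m] := ltnP 1 (mdeg m).
  rewrite memN_msupp_eq0; last exact: msize_mdeg_ge (leq_trans size_p deg_m).
  have -> : (m == 0%MM) = false by rewrite eq_sym mdeg_lt_neq ?mdeg0 // (@leq_trans 2).
  by rewrite !mdeg_lt_neq ?mdeg_u1 ?mdeg_u2 // !mulr0 !addr0.
have [/eqP | m0] := eqVneq (mdeg m) 0%N.
  by rewrite mdeg_eq0 => /eqP->; rewrite eqxx /u1 /u2 !mnm1_eq0 !mulr0 !addr0 mulr1.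
have /mdeg1P[i /eqP->] : mdeg m == 1%N by rewrite eqn_leq deg_m lt0n m0.
rewrite mnm1_eq0 mulr0 add0r /u1 /u2 !eq_mnm1.
case: i => [[|[|]] //= lt_i2].
  by rewrite (_ : Ordinal lt_i2 = i1) ?mulr1 ?mulr0 ?addr0 //; apply: val_inj.
by rewrite (_ : Ordinal lt_i2 = i2) ?mulr1 ?mulr0 ?add0r //; apply: val_inj.
Qed.

(* A linear factor would make a line lie on the curve. *)
Lemma sym_curve_poly_no_linear_factor (p q : {mpoly C[2]}) :
  sym_curve_poly = p * q -> (msize p <= 2)%N -> ~ (1 < msize p)%N.
Proof.
move=> pq size_p; rewrite (msize_le2_affine size_p).
set p0 := p@_0%MM; set p1 := p@_u1; set p2 := p@_u2.
have p_eval s : p.@[pt2 s] = p0 + p1 * s.1 + p2 * s.2.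
  by rewrite (msize_le2_affine size_p) !(mevalD, mevalZ, mevalC, mevalXU).
have on_curve s : p.@[pt2 s] = 0 -> sym_curve s.1 s.2 = 0.
  by move=> ps; rewrite -sym_curve_polyE pq mevalM ps mul0r.
have [p20 | p20] := eqVneq p2 0.
  have [p10 | p10] := eqVneq p1 0.
    by rewrite p10 p20 !scale0r !addr0 msizeC; case: (p0 != 0).
  move=> _; have on_vertical t : sym_curve (- p0 / p1) t = 0.
    by apply: (on_curve (- p0 / p1, t)); rewrite p_eval /= p20; field.
  exact: sym_curve_no_vertical_line on_vertical.
move=> _; have on_line t : sym_curve t (- p1 / p2 * t + - p0 / p2) = 0.
  by apply: (on_curve (t, - p1 / p2 * t + - p0 / p2)); rewrite p_eval /=; field.
exact: sym_curve_no_line on_line.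
Qed.

Lemma sym_curve_poly_irreducible : mirreducible sym_curve_poly.
Proof.
split=> [|p q pq]; first by rewrite /mconst msize_sym_curve_poly.
have P0 : sym_curve_poly != 0.
  by apply/eqP => P0; have := msize_sym_curve_poly; rewrite P0 msize0.
have p0 : p != 0 by apply: contraNneq P0 => p0; rewrite pq p0 mul0r.
have q0 : q != 0 by apply: contraNneq P0 => q0; rewrite pq q0 mulr0.
have := msizeM p0 q0; rewrite -pq msize_sym_curve_poly => size_pq.
rewrite /mconst; apply/orP; case: (leqP (msize p) 1) => [|p1]; first by left.
case: (leqP (msize q) 1) => [|q1]; first by right.
exfalso; case: (leqP (msize p) 2) => p2.
  exact: sym_curve_poly_no_linear_factor pq p2 p1.
have q2 : (msize q <= 2)%N by move: size_pq p2; set np := msize p; set nq := msize q; lia.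
by apply: (sym_curve_poly_no_linear_factor (q := p)) q2 q1; rewrite mulrC.
Qed.

(* k and 1/(4k) are the two roots of 4 t^2 - (s1 + 2) t + 1, and on the line
   sigma_1 = s1 the cubic is -4 (s2 - param(k).2) (s2 - param(1/(4k)).2). *)
Lemma sym_curve_eq0_param s : sym_curve s.1 s.2 = 0 <-> exists2 k, k != 0 & s = param k.
Proof.
case: s => s1 s2 /=; split=> [on_curve | [k k0 [-> ->]]]; last by rewrite /sym_curve; field.
have [k kE] := quadratic_root (- (s1 + 2) / 4) (1 / 4).
have k0 : k != 0.
  by apply: contra_eq_neq kE => ->; rewrite expr0n mulr0 !add0r mul1r invr_eq0 pnatr_eq0.
have k4 : (4 * k)^-1 != 0 by rewrite invr_eq0 mulf_neq0 // pnatr_eq0.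
have {kE} s1E : s1 = (param k).1.
  by apply: subr0_eq; rewrite /param /= -(mulr0 (- (4 / k))) -kE; field.
subst s1.
have : (s2 - (param k).2) * (s2 - (param (4 * k)^-1).2) * -4 = 0.
  by rewrite -[RHS]on_curve /sym_curve /param /=; field; rewrite k0.
have n4 : (-4 : C) != 0 by rewrite oppr_eq0 pnatr_eq0.
move/mulf_eq0_cancelr/(_ n4)/mulf_eq0_or => -[/subr0_eq s2E | /subr0_eq s2E].
- by exists k => //; rewrite s2E -surjective_pairing.
- by exists (4 * k)^-1 => //; rewrite s2E /param /=; congr (_, _); field.
Qed.

Lemma msingular_sym_curve_poly s : msingular sym_curve_poly s <-> s = (-6, 12).
Proof.
rewrite /msingular sym_curve_polyE sym_curve_poly_d1 sym_curve_poly_d2.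
split=> [|->]; last by rewrite /sym_curve /=; split; ring.
case: s => x y /= [on_curve dx dy].
have : 2 * x * (x + 6) ^+ 2 = 0.
  transitivity (8 * (6 * x ^+ 2 + 2 * x * y - 2 * x - 8 * y + 12)
                + (2 * x - 8) * (x ^+ 2 - 8 * x - 8 * y + 12)); first by ring.
  by rewrite dx dy; ring.
case/mulf_eq0_or => [/mulf_eq0_or[/eqP | x0] | /eqP].
- by rewrite pnatr_eq0.
- have e432 : 432%:R * (1 : C) = 0.
    transitivity (- 16 * sym_curve x y + (8 * y - 12) * (x ^+ 2 - 8 * x - 8 * y + 12)).
      by rewrite x0 /sym_curve; ring.
    by rewrite on_curve dy; ring.
  by move/eqP: (natmul_eq0 e432 isT); rewrite oner_eq0.
rewrite expf_eq0 /= addr_eq0 => /eqP x6; subst x.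
have e8 : 8%:R * (12 - y) = 0 by rewrite -[RHS]dy; ring.
by rewrite -(subr0_eq (natmul_eq0 e8 isT)).
Qed.

Lemma mcusp_sym_curve_poly : mcusp sym_curve_poly (-6, 12).
Proof.
rewrite /mcusp sym_curve_poly_d11 sym_curve_poly_d12 sym_curve_poly_d22 /=.
split; first exact/msingular_sym_curve_poly.
  by case=> _ _ /eqP; rewrite oppr_eq0 pnatr_eq0.
by ring.
Qed.

(* sigma_1 determines k up to the involution k |-> 1/(4k), and sigma_2
   separates k from 1/(4k) except at the fixed points k = 1/2, -1/2. *)
Lemma param_inj k k' : k != 0 -> k' != 0 -> param k = param k' -> k = k'.
Proof.
move=> k0 k'0 [e1 e2].
have : (k - k') * (4 * k * k' - 1) = 0.
  transitivity (k * k' * ((4 * k - 2 + k^-1) - (4 * k' - 2 + k'^-1))); first by field; rewrite ?k0 ?k'0.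
  by rewrite e1 subrr mulr0.
case/mulf_eq0_or => [/subr0_eq // | kk'].
have {kk'} k'E : k' = (4 * k)^-1.
  by apply: subr0_eq; rewrite -(mul0r (4 * k)^-1) -kk'; field; rewrite ?k0.
subst k'; have : (4 * k ^+ 2 - 1) * (2 * k + 1) ^+ 2 = 0.
  transitivity (4 * k ^+ 2 * ((4 * k ^+ 2 - 4 * k + 5 - 2 / k)
      - (4 * (4 * k)^-1 ^+ 2 - 4 * (4 * k)^-1 + 5 - 2 / (4 * k)^-1))); first by field; rewrite ?k0 ?k'0.
  by rewrite e2 subrr mulr0.
have fixed_pt : 4 * k ^+ 2 - 1 = 0 -> k = (4 * k)^-1.
  by move=> kE; apply: subr0_eq; rewrite -(mul0r (4 * k)^-1) -kE; field; rewrite ?k0.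
case/mulf_eq0_or => [/fixed_pt // | /eqP]; rewrite expf_eq0 /= => /eqP k_half.
apply: fixed_pt; transitivity ((2 * k - 1) * (2 * k + 1)); first by ring.
by rewrite k_half mulr0.
Qed.

End SymmetryCurve.

Lemma symmetry_locus_param (C : numClosedFieldType) (s : C * C) :
  symmetry_locus s <-> exists2 k : C, k != 0 & s = param k.
Proof.
split=> [[F [HF [Faut Fs]]] | [k k0 ->]]; last exact: param_in_symmetry_locus.
by have [k k0 sE] := nontriv_aut_sigmas HF Faut Fs; exists k => //; rewrite -sE -surjective_pairing.
Qed.

Theorem corollary5p3 (C : numClosedFieldType) :
  (* parametric description of S *)
  (forall s : C * C,
     symmetry_locus s <-> exists2 k : C, k != 0 & s = param k) /\
  (* the parametrisation is injective, hence birational: S has genus zero *)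
  (forall k k' : C, k != 0 -> k' != 0 -> param k = param k' -> k = k') /\
  (* S is an irreducible plane curve of degree three, non-singular except
     for a cusp at (-6, 12) *)
  (exists P : {mpoly C[2]},
     [/\ msize P = 4%N, mirreducible P,
         (forall s : C * C, symmetry_locus s <-> P.@[pt2 s] = 0),
         (forall s : C * C, msingular P s <-> s = (-6, 12)) &
         mcusp P (-6, 12)]) /\
  (* the cusp is the class of z |-> 1/z^2, and corresponds to k = -1/2 *)
  is_rat2 (inv_sq_map C) /\ sigmas (inv_sq_map C) (-6) 12 /\
  has_nontriv_aut (inv_sq_map C) /\
  param (- 2^-1 : C) = (-6, 12).
Proof.
split; first exact: symmetry_locus_param.
split; first exact: param_inj.
split.
  exists (sym_curve_poly C); split.
  - exact: msize_sym_curve_poly.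
  - exact: sym_curve_poly_irreducible.
  - by move=> s; rewrite symmetry_locus_param sym_curve_polyE sym_curve_eq0_param.
  - exact: msingular_sym_curve_poly.
  - exact: mcusp_sym_curve_poly.
split; first exact: rat2_inv_sq_map.
split; first exact: sigmas_inv_sq_map.
split; first exact: nontriv_aut_inv_sq_map.
exact: param_neg_half.
Qed.
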